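(* Let $(X,d)$ be a compact metric space without isolated points and let $f_{1,\infty}=\{f_n\}$ be a sequence of continuous maps $f_n:X\to X$ converging uniformly to $f$. If $(X,f_{1,\infty})$ is multi-transitive and the set of periodic points of $f_{1,\infty}$ is dense in $X$, then $(X,f_{1,\infty})$ is $\mathcal{N}$-sensitive.
   Context: Write $f_i^n=f_{n+i-1}\circ\cdots\circ f_i$, $f_i^0=\mathrm{id}$. A point $x$ is periodic for $f_{1,\infty}$ if there is $N\in\mathbb{N}$ with $f_1^{nN}(x)=x$ for every $n\in\mathbb{N}$. The system is multi-transitive if for every $m\in\mathbb{N}$ and all nonempty open $U_1,\dots,U_m,V_1,\dots,V_m\subseteq X$ there is $k\in\mathbb{N}$ with $f_1^{ik}(U_i)\cap V_i\ne\varnothing$ for each $i=1,\dots,m$. $f_{1,\infty}^{[k]}=\{f^k_{k(n-1)+1}\}_{n=1}^\infty$ (its $n$-fold composition from index $1$ is $f_1^{kn}$), and $N_{f_{1,\infty}}(V,\delta)=\{n\in\mathbb{N}:\exists u,v\in V,\ d(f_1^n(u),f_1^n(v))>\delta\}$. The system is $\mathcal{N}$-sensitive if for every $r\in\mathbb{N}$ there is $\delta>0$ such that $\bigcap_{i=1}^r N_{f_{1,\infty}^{[i]}}(U_i,\delta)\ne\varnothing$ for all nonempty open $U_1,\dots,U_r\subseteq X$. *)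

From HB Require Import structures.
From mathcomp Require Import all_boot all_order all_algebra.
From mathcomp Require Import all_classical all_reals all_analysis.
Set Implicit Arguments. Unset Strict Implicit. Unset Printing Implicit Defensive.
Import Order.TTheory GRing.Theory Num.Theory.
Local Open Scope classical_set_scope.
Local Open Scope ring_scope.

(* Sequences are indexed from 1: f 1, f 2, ...  (f 0 is never used). *)

(* fcomp f i n = f_i^n = f_(n+i-1) o ... o f_i,  fcomp f i 0 = id *)
Fixpoint fcomp {X : Type} (f : nat -> X -> X) (i n : nat) : X -> X :=
  match n with
  | 0 => id
  | m.+1 => fun x => f (m + i)%N (fcomp f i m x)
  end.

Definition fblock {X : Type} (f : nat -> X -> X) (k : nat) : nat -> X -> X :=
  fun n => fcomp f (k * (n - 1) + 1)%N k.

Definition periodic_pt {X : Type} (f : nat -> X -> X) (x : X) : Prop :=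
  exists N : nat, (0 < N)%N /\ forall n : nat, (0 < n)%N -> fcomp f 1 (n * N) x = x.

Definition multi_transitive {X : topologicalType} (f : nat -> X -> X) : Prop :=
  forall (m : nat) (U V : nat -> set X), (0 < m)%N ->
    (forall i, (1 <= i <= m)%N -> open (U i) /\ U i !=set0 /\ open (V i) /\ V i !=set0) ->
    exists k : nat, (0 < k)%N /\
      forall i, (1 <= i <= m)%N -> (fcomp f 1 (i * k) @` U i) `&` V i !=set0.

Definition Nset {R : realType} {X : metricType R} (f : nat -> X -> X) (V : set X)
  (delta : R) : set nat :=
  [set n | (0 < n)%N /\ exists u v, V u /\ V v /\ delta < mdist (fcomp f 1 n u) (fcomp f 1 n v)].

Definition N_sensitive {R : realType} {X : metricType R} (f : nat -> X -> X) : Prop :=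
  forall r : nat, (0 < r)%N -> exists delta : R, 0 < delta /\
    forall U : nat -> set X, (forall i, (1 <= i <= r)%N -> open (U i) /\ U i !=set0) ->
      exists n : nat, forall i, (1 <= i <= r)%N -> Nset (fblock f i) (U i) delta n.

From HB Require Import structures.
From mathcomp Require Import all_boot all_order all_algebra.
From mathcomp Require Import all_classical all_reals all_analysis.
Import Order.TTheory GRing.Theory Num.Theory.
Local Open Scope classical_set_scope.
Local Open Scope ring_scope.
From Stdlib Require Import Lia.
From mathcomp Require Import zify lra.

Set Implicit Arguments.
Unset Strict Implicit.
Unset Printing Implicit Defensive.

(* Pick periodic points p_i in U_i and a common period M of all of them. Apply
   multi-transitivity to the r*M pairs (U_j, V_j), where (U_(iM), V_(iM)) is
   (U_i, an open set far from p_i) and the other pairs are trivial: this gives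
   k and points u_i in U_i whose image under f_1^(iMk) lies far from
   p_i = f_1^(iMk)(p_i). Since f_1^(iMk) is the (Mk)-th iterate of the i-th
   block system, one time n = Mk separates U_i for every block system at once. *)

Section Composition.
Variables (Y : Type) (f : nat -> Y -> Y).

Lemma fcompD a b x : fcomp f (b + 1) a (fcomp f 1 b x) = fcomp f 1 (a + b) x.
Proof. by elim: a => [|a IH] //=; rewrite IH addnA. Qed.

Lemma fcomp_fblock k n x : fcomp (fblock f k) 1 n x = fcomp f 1 (k * n) x.
Proof.
elim: n => [|n IH]; first by rewrite muln0.
by rewrite /= IH /fblock addnK fcompD; congr fcomp; lia.
Qed.

Lemma periodic_pts_common_period (p : nat -> Y) r :
  (forall i, (1 <= i <= r)%N -> periodic_pt f (p i)) ->
  exists M, (0 < M)%N /\ forall i n, (1 <= i <= r)%N -> (0 < n)%N ->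
    fcomp f 1 (n * M) (p i) = p i.
Proof.
elim: r => [_|r IH per_p]; first by exists 1%N; split => // i n; lia.
have [|M [M0 HM]] := IH; first by move=> i Hi; apply: per_p; lia.
have [|N [N0 HN]] := per_p r.+1; first lia.
exists (M * N)%N; split; first by rewrite muln_gt0 M0.
move=> i n Hi n0; have [ir|->] : (1 <= i <= r)%N \/ i = r.+1 by lia.
- by rewrite mulnA -mulnAC HM // muln_gt0 n0.
- by rewrite mulnA HN // muln_gt0 n0.
Qed.

End Composition.

Lemma multi_transitive_mul (X : topologicalType) (f : nat -> X -> X)
    (M r : nat) (U V : nat -> set X) :
  multi_transitive f -> (0 < M)%N -> (0 < r)%N ->
  (forall i, (1 <= i <= r)%N ->
     open (U i) /\ U i !=set0 /\ open (V i) /\ V i !=set0) ->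
  exists k, (0 < k)%N /\ forall i, (1 <= i <= r)%N ->
    (fcomp f 1 (i * (M * k)) @` U i) `&` V i !=set0.
Proof.
move=> mt M0 r0 UV.
have [_ [[x _] _]] := UV 1%N ltac:(lia).
pose Uj j := if (M %| j)%N then U (j %/ M)%N else setT.
pose Vj j := if (M %| j)%N then V (j %/ M)%N else setT.
have [|k [k0 Hk]] := mt (r * M)%N Uj Vj ltac:(lia).
  move=> j Hj; rewrite /Uj /Vj; case: ifP => [/dvdnP[q jE]|_].
    by apply: UV; move: Hj; rewrite jE mulnK //; nia.
  by do !split => //; [exact: openT|exists x|exact: openT|exists x].
exists k; split => // i Hi.
by have := Hk (i * M)%N ltac:(nia); rewrite /Uj /Vj dvdn_mull // mulnK // mulnA.
Qed.

Lemma dense_pick (X : topologicalType) (S : set X) (U : nat -> set X) r :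
  (0 < r)%N -> dense S -> (forall i, (1 <= i <= r)%N -> open (U i) /\ U i !=set0) ->
  exists p : nat -> X, forall i, (1 <= i <= r)%N -> U i (p i) /\ S (p i).
Proof.
move=> r0 dS HU; have [U1o U1n] := HU 1%N ltac:(lia).
have [x _] := dS _ U1n U1o.
suff /choice[p Hp] : forall i, exists y, (1 <= i <= r)%N -> U i y /\ S y by exists p.
move=> i; have [Hi|_] := boolP (1 <= i <= r)%N; last by exists x.
by have [Uo Un] := HU i Hi; have [y []] := dS _ Un Uo; exists y.
Qed.

Section NoIsolatedPoints.
Context {R : realType} {X : metricType R}.
Hypothesis no_isolated : forall x : X, limit_point [set: X] x.

Lemma exists_far_points : exists D : R, 0 < D /\ forall x : X, exists c, D <= mdist x c.
Proof.
have [[a _]|noX] := pselect (exists a : X, True); last first.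
  by exists 1; split => // x; case: noX; exists x.
have [b [ba _ _]] := @no_isolated a setT filterT.
have ab0 : 0 < mdist a b by rewrite mdist_gt0 eq_sym.
exists (mdist a b / 2); split => [|x]; first lra.
have [xa|xa] := lerP (mdist a b / 2) (mdist x a); first by exists a.
exists b; have := metric_triangle a x b; rewrite (metric_sym a x); lra.
Qed.

Lemma exists_far_open_sets : exists D : R, 0 < D /\ forall x : X,
  exists W : set X, [/\ open W, W !=set0 & forall y, W y -> D < mdist x y].
Proof.
have [D [D0 far]] := exists_far_points.
have D2 : 0 < D / 2 by lra.
exists (D / 2); split => // x; have [c xc] := far x.
have [Wo Wc] := open_nbhs_ball c (PosNum D2).
exists (ball c (D / 2))°; split => //; first by exists c.
move=> y /interior_subset; rewrite ballEmdist /= => cy.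
have := metric_triangle x y c; rewrite (metric_sym y c); lra.
Qed.

End NoIsolatedPoints.

Theorem mainTheorem9 (R : realType) (X : metricType R)
  (f : nat -> X -> X) (g : X -> X) :
  compact [set: X] ->
  (forall x : X, limit_point [set: X] x) ->
  (forall n : nat, (0 < n)%N -> continuous (f n)) ->
  (forall e : R, 0 < e -> exists N : nat, forall n : nat, (N <= n)%N ->
       forall x : X, mdist (f n x) (g x) < e) ->
  multi_transitive f ->
  dense [set x : X | periodic_pt f x] ->
  N_sensitive f.
Proof.
move=> _ no_isolated _ _ mt dper r r0.
have [D [D0 /choice[W HW]]] := exists_far_open_sets no_isolated.
exists D; split => // U HU.
have [p Hp] := dense_pick r0 dper HU.
have [M [M0 HM]] := periodic_pts_common_period (fun i Hi => (Hp i Hi).2).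
have [|k [k0 Hk]] := multi_transitive_mul (U := U) (V := W \o p) mt M0 r0.
  move=> i Hi; have [Wo Wn _] := HW (p i).
  by have [Uo Un] := HU i Hi.
exists (M * k)%N => i Hi; split; first by rewrite muln_gt0 M0.
have [_ [[u Uu <-] Wy]] := Hk i Hi.
exists (p i), u; split; first exact: (Hp i Hi).1.
split => //; rewrite !fcomp_fblock.
have -> : fcomp f 1 (i * (M * k)) (p i) = p i.
  by rewrite mulnA mulnAC HM // muln_gt0 k0 andbT; case/andP: Hi.
by have [_ _ farW] := HW (p i); apply: farW.
Qed.
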